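(* Let $d\ge1$, $M>0$, and let $f:[0,1]^d\to\mathbb{R}$ satisfy $|f(x)-f(y)|\le M\|x-y\|_\infty$ for all $x,y\in[0,1]^d$; let $g(x)=f(x)\bmod 1$. Let $m>1$ be an integer, $x_i=\frac{i-1}{m-1}$ for $i\in[m]$, and for $\mathbf{i}=(i_1,\dots,i_d)\in[m]^d$ let $x_{\mathbf i}=(x_{i_1},\dots,x_{i_d})$. Let $\delta\in[0,1/2]$ and $\hat g:[0,1]^d\to[0,1)$ satisfy $d_w(\hat g(x_{\mathbf i}),g(x_{\mathbf i}))\le\delta$ for all $\mathbf i\in[m]^d$. For each $\mathbf i$ let $\eta_{\mathbf i}\in[-\delta,\delta]$ be such that $\hat g(x_{\mathbf i})=(f(x_{\mathbf i})+\eta_{\mathbf i})\bmod 1$, and set $\hat f(x_{\mathbf i}):=f(x_{\mathbf i})+\eta_{\mathbf i}$. If $2\delta+\frac{M}{m-1}<\frac12$, then for each $j\in[d]$ and each $\mathbf i\in[m]^d$ with $i_j>1$, $$D_j\hat f(x_{\mathbf i})=\begin{cases}D_j\hat g(x_{\mathbf i}) & \text{if } |D_j\hat g(x_{\mathbf i})|<1/2,\\ 1+D_j\hat g(x_{\mathbf i}) & \text{if } D_j\hat g(x_{\mathbf i})<-1/2,\\ -1+D_j\hat g(x_{\mathbf i}) & \text{if } D_j\hat g(x_{\mathbf i})>1/2.\end{cases}$$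
   Context: For $a\in\mathbb{R}$, $a\bmod1=a-\lfloor a\rfloor\in[0,1)$. The wrap-around distance on $[0,1)$ is $d_w(a,b)=\min(|a-b|,1-|a-b|)$. $[m]=\{1,\dots,m\}$. For a function $h$ defined on the grid points and $\mathbf i\in[m]^d$ with $i_j>1$, the finite difference along coordinate $j$ is $D_jh(x_{\mathbf i})=h(x_{i_1},\dots,x_{i_j},\dots,x_{i_d})-h(x_{i_1},\dots,x_{i_j-1},\dots,x_{i_d})$. *)

From mathcomp Require Import all_boot all_order all_algebra.
From mathcomp Require Export reals.
Set Implicit Arguments. Unset Strict Implicit. Unset Printing Implicit Defensive.
Import Order.TTheory GRing.Theory Num.Theory.
Local Open Scope ring_scope.

Definition mod1 {R : realType} (a : R) : R := a - (Num.floor a)%:~R.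

Definition dw {R : realType} (a b : R) : R := Num.min `|a - b| (1 - `|a - b|).

Definition dinf {R : realType} {d : nat} (x y : 'I_d -> R) : R :=
  \big[Num.max/0]_(k < d) `|x k - y k|.

Definition in_cube {R : realType} {d : nat} (x : 'I_d -> R) : Prop :=
  forall k, 0 <= x k <= 1.

(* multi-indices in [m]^d, 1-based as in the paper *)
Definition in_grid {d : nat} (m : nat) (i : 'I_d -> nat) : Prop :=
  forall k, (1 <= i k <= m)%N.

Definition gridpt {R : realType} {d : nat} (m : nat) (i : 'I_d -> nat) : 'I_d -> R :=
  fun k => ((i k).-1)%:R / (m.-1)%:R.

Definition prev_idx {d : nat} (j : 'I_d) (i : 'I_d -> nat) : 'I_d -> nat :=
  fun k => if k == j then (i k).-1 else i k.

Definition Dj {R : realType} {d : nat} (j : 'I_d) (h : ('I_d -> nat) -> R)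
  (i : 'I_d -> nat) : R := h i - h (prev_idx j i).

(* At every grid point fhat and ghat differ by an integer, so D_j fhat - D_j ghat
   is an integer.  The Lipschitz bound and the noise bound give
   |D_j fhat| <= M/(m-1) + 2 delta < 1/2, while ghat takes values in [0,1), so
   |D_j ghat| < 1.  These two bounds leave exactly one possible integer, which is
   0, 1 or -1 according to the size and sign of D_j ghat. *)
From mathcomp Require Import all_boot all_order all_algebra.
From mathcomp Require Import reals.
From mathcomp Require Import ring lra zify.
Set Implicit Arguments. Unset Strict Implicit. Unset Printing Implicit Defensive.
Import Order.TTheory GRing.Theory Num.Theory.
Local Open Scope ring_scope.

Section Unwrapping.

Variable R : realType.

Lemma mod1_subE (a b : R) :
  a - b = mod1 a - mod1 b + (Num.floor a - Num.floor b)%:~R.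
Proof. by rewrite /mod1 intrB; ring. Qed.

Lemma int_eq_of_dist_lt1 (z k : int) : (k - 1 < z)%R -> (z < k + 1)%R -> z = k.
Proof. lia. Qed.

Lemma unwrap_int_shift (F G : R) (z : int) :
  F = G + z%:~R -> `|F| < 1 / 2 -> `|G| < 1 ->
    (`|G| < 1 / 2 -> F = G) /\
    (G < - (1 / 2) -> F = 1 + G) /\
    (1 / 2 < G -> F = - 1 + G).
Proof.
move=> -> /[1!ltr_norml] /andP[F1 F2] /[1!ltr_norml] /andP[G1 G2].
have z_eq (k : int) : k%:~R - 1 < z%:~R :> R -> z%:~R < k%:~R + 1 :> R -> z = k.
  rewrite -[1 : R]/(1%:~R) -intrB -intrD !ltr_int; exact: int_eq_of_dist_lt1.
split; [|split].
- rewrite ltr_norml => /andP[G3 G4].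
  by rewrite (z_eq 0) ?mulr0z; lra.
- move=> G3.
  by rewrite (z_eq 1) ?mulr1z; lra.
- move=> G3.
  by rewrite (z_eq (-1)) ?intrN ?mulr1z; lra.
Qed.

End Unwrapping.

Lemma prev_idx_in_grid (d m : nat) (j : 'I_d) (i : 'I_d -> nat) :
  in_grid m i -> (1 < i j)%N -> in_grid m (prev_idx j i).
Proof.
move=> i_grid ij_gt1 k; rewrite /prev_idx.
by case: eqP => [->|_]; have := i_grid k; have := i_grid j; lia.
Qed.

Lemma dinf_le (R : realType) (d : nat) (x y : 'I_d -> R) (e : R) :
  0 <= e -> (forall k, `|x k - y k| <= e) -> dinf x y <= e.
Proof.
move=> e_ge0 xy_le; rewrite /dinf.
by apply: (big_ind (fun r : R => r <= e)) => // r s; rewrite ge_max => -> ->.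
Qed.

Lemma gridpt_in_cube (R : realType) (d m : nat) (i : 'I_d -> nat) :
  (1 < m)%N -> in_grid m i -> in_cube (gridpt (R:=R) m i).
Proof.
move=> m_gt1 i_grid k; have m1_gt0 : (0 : R) < (m.-1)%:R by rewrite ltr0n; lia.
rewrite /gridpt divr_ge0 //= ler_pdivrMr // mul1r ler_nat.
by have := i_grid k; lia.
Qed.

Lemma dinf_gridpt_prev_idx (R : realType) (d m : nat) (j : 'I_d) (i : 'I_d -> nat) :
  (1 < i j)%N ->
  dinf (gridpt (R:=R) m i) (gridpt m (prev_idx j i)) <= (m.-1)%:R^-1.
Proof.
move=> ij_gt1; have m1_inv_ge0 : (0 : R) <= (m.-1)%:R^-1.
  by rewrite invr_ge0 ler0n.
apply: dinf_le => // k; rewrite /gridpt /prev_idx.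
case: eqP => [->|_]; last by rewrite subrr normr0.
have -> : (i j).-1 = ((i j).-2).+1 by lia.
by rewrite -mulrBl -natr1 addrC addKr normrM normr1 mul1r ger0_norm.
Qed.

Theorem mainTheorem3 (R : realType) (d : nat) (M : R)
  (f : ('I_d -> R) -> R) (m : nat) (delta : R)
  (ghat : ('I_d -> R) -> R) (eta : ('I_d -> nat) -> R) :
  (1 <= d)%N ->
  0 < M ->
  (forall x y, in_cube x -> in_cube y -> `|f x - f y| <= M * dinf x y) ->
  (1 < m)%N ->
  0 <= delta <= 1 / 2 ->
  (forall x, in_cube x -> 0 <= ghat x < 1) ->
  (forall i, in_grid m i ->
     dw (ghat (gridpt m i)) (mod1 (f (gridpt m i))) <= delta) ->
  (forall i, in_grid m i ->
     - delta <= eta i <= delta /\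
     ghat (gridpt m i) = mod1 (f (gridpt m i) + eta i)) ->
  2 * delta + M / (m.-1)%:R < 1 / 2 ->
  let fhat := fun i => f (gridpt m i) + eta i in
  let ghat_g := fun i => ghat (gridpt m i) in
  forall (j : 'I_d) (i : 'I_d -> nat), in_grid m i -> (1 < i j)%N ->
    (`|Dj j ghat_g i| < 1 / 2 -> Dj j fhat i = Dj j ghat_g i) /\
    (Dj j ghat_g i < - (1 / 2) -> Dj j fhat i = 1 + Dj j ghat_g i) /\
    (1 / 2 < Dj j ghat_g i -> Dj j fhat i = - 1 + Dj j ghat_g i).
Proof.
move=> _ M_gt0 f_lip m_gt1 _ ghat01 _ eta_spec small fhat ghat_g j i i_grid ij_gt1.
have p_grid := prev_idx_in_grid i_grid ij_gt1.
have [/andP[ei1 ei2] ghat_i] := eta_spec i i_grid.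
have [/andP[ep1 ep2] ghat_p] := eta_spec _ p_grid.
have f_step : `|f (gridpt m i) - f (gridpt m (prev_idx j i))| <= M / (m.-1)%:R.
  apply: le_trans (f_lip _ _ (gridpt_in_cube R m_gt1 i_grid)
                            (gridpt_in_cube R m_gt1 p_grid)) _.
  by rewrite ler_pM2l // dinf_gridpt_prev_idx.
apply: unwrap_int_shift.
- by rewrite /Dj /ghat_g ghat_i ghat_p; apply: mod1_subE.
- move: f_step; rewrite /Dj /fhat !ltr_norml ler_norml => /andP[? ?].
  apply/andP; split; lra.
- have /andP[? ?] := ghat01 _ (gridpt_in_cube R m_gt1 i_grid).
  have /andP[? ?] := ghat01 _ (gridpt_in_cube R m_gt1 p_grid).
  by rewrite /Dj /ghat_g ltr_norml; apply/andP; split; lra.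
Qed.
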